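(* Let $t,t':V\to\mathbb{R}_{\ge0}$ be fingerprints with $t_v\le t'_v$ for all $v\in V$. If two vertices $u,v$ are actively connected in shadow moat growing on $(G,t)$, then they are actively connected in shadow moat growing on $(G,t')$.
   Context: $G=(V,E,c)$ is an undirected graph with edge costs $c:E\to\mathbb{R}_{\ge0}$; $\delta(S)$ denotes the edges with exactly one endpoint in $S$. Shadow moat growing on $(G,t)$: a continuous process in time $\tau\ge0$ maintaining a forest $F$ (initially empty), the components of $(V,F)$, and values $y_S\ge0$ (initially $0$). At time $\tau$ a component $C$ is active iff it contains $w$ with $t_w>\tau$; each active component $C$ increases $y_C$ at rate $1$. When an edge $e$ between different components satisfies $\sum_{S:e\in\delta(S)}y_S=c_e$ it is added to $F$ and the components merge (ties processed one at a time by a fixed rule). The process stops when no component is active. Vertices $u,v$ are actively connected in a run if there is a time $\tau$ such that $u$ and $v$ lie in a common component at time $\tau$ and, for every $\tau'\in[0,\tau)$, the components containing $u$ and containing $v$ at time $\tau'$ are both active (i.e., both remain in active components from the start until they become connected). *)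

From HB Require Import structures.
From mathcomp Require Import all_boot all_order all_algebra.
From mathcomp Require Import reals.
Set Implicit Arguments. Unset Strict Implicit. Unset Printing Implicit Defensive.
Import Order.TTheory GRing.Theory Num.Theory.
Local Open Scope ring_scope.

(* A run of shadow moat growing is recorded as the finite sequence of its
   merge events (tau_k, (u_k, v_k)) in processing order: at time tau_k the
   edge u_k v_k is added to F. *)

Section ShadowMoat.
Variables (R : realType) (V : finType).

Definition event := (R * (V * V))%type.

Definition frel (F : seq (V * V)) : rel V :=
  fun x y => ((x, y) \in F) || ((y, x) \in F).

Definition comp (F : seq (V * V)) (x : V) : {set V} :=
  [set y | connect (frel F) x y].

Definition is_comp (F : seq (V * V)) (S : {set V}) : bool :=
  [exists x, S == comp F x].

Definition forest_at (ev : seq event) (i : nat) : seq (V * V) :=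
  map snd (take i ev).

(* number of events processed by time tau (inclusive: state "at time tau"
   is the state after all merges happening at tau) *)
Definition n_at (ev : seq event) (tau : R) : nat :=
  count (fun p : event => p.1 <= tau) ev.

Definition F_at (ev : seq event) (tau : R) : seq (V * V) :=
  forest_at ev (n_at ev tau).

(* the forest F_i (after i events) is in force on [start i, end_ i) *)
Definition start (ev : seq event) (i : nat) : R :=
  if i is j.+1 then nth 0 (map fst ev) j else 0.
Definition end_ (ev : seq event) (i : nat) (tau : R) : R :=
  if (i < size ev)%N then nth 0 (map fst ev) i else tau.

Variable t : V -> R.

(* S is active at time s iff s < max_{w in S} t_w *)
Definition Tmax (S : {set V}) : R := \big[Num.max/0]_(w in S) t w.

(* y_S at time tau: the measure of the set of times s in [0,tau) at which
   S is an active component. *)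
Definition yval (ev : seq event) (S : {set V}) (tau : R) : R :=
  \sum_(i < (size ev).+1)
     (if is_comp (forest_at ev i) S
      then Num.max 0 (Num.min (Num.min (end_ ev i tau) tau) (Tmax S)
                      - start ev i)
      else 0).

Definition load (ev : seq event) (u v : V) (tau : R) : R :=
  \sum_(S : {set V}) (if (u \in S) != (v \in S) then yval ev S tau else 0).

Definition active (F : seq (V * V)) (tau : R) (x : V) : bool :=
  [exists w in comp F x, tau < t w].

Variables (adj : rel V) (c : V -> V -> R).

(* ev is the (complete) run of shadow moat growing on (G, t), for some
   tie-breaking order. *)
Definition is_run (ev : seq event) : Prop :=
  [/\ (forall p, p \in ev -> 0 <= p.1),
      sorted <=%R (map fst ev),
      (forall i : 'I_(size ev),
         let: (tau, (u, v)) := tnth (in_tuple ev) i in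
         [/\ adj u v, ~~ connect (frel (forest_at ev i)) u v
           & load ev u v tau = c u v]) &
      (* at every time, after processing the merges at that time, no edge
         between different components is tight (hence edges are added as
         soon as they become tight, and the run is complete) *)
      (forall tau, 0 <= tau -> forall u v, adj u v ->
         ~~ connect (frel (F_at ev tau)) u v -> load ev u v tau < c u v)].

Definition actively_connected (ev : seq event) (u v : V) : Prop :=
  exists tau, [/\ 0 <= tau, connect (frel (F_at ev tau)) u v &
    forall s, 0 <= s -> s < tau ->
      active (F_at ev s) s u && active (F_at ev s) s v].

End ShadowMoat.

From Pilot Require Import Defs.
From HB Require Import structures.
From mathcomp Require Import all_boot all_order all_algebra.
From mathcomp Require Import reals classical_sets ereal measure lebesgue_measure.
Set Implicit Arguments. Unset Strict Implicit. Unset Printing Implicit Defensive.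
Import Order.TTheory GRing.Theory Num.Theory.
Local Open Scope ring_scope.

(* The load of an edge ab at time tau is |B_a| + |B_b|, where B_x is the set of
   times s < tau at which a and b are still separated and the component of x
   is active.  Suppose that up to time tau every connection of the run on t is
   also present in the run on t'.  If ab is not yet merged in the t'-run at
   tau, then B_x for t is contained in B_x for t': separation in the t'-run
   implies separation in the t-run, and a component of the t-run sits inside
   the corresponding component of the t'-run, where the larger fingerprints
   keep it active.  So the t'-load of ab dominates its t-load.  Going through
   the merge events of the t-run in order, each merged edge ab became tight in
   the t-run, so if it were still unmerged in the t'-run its t'-load would
   have reached c_ab as well, contradicting completeness of that run.  Hence
   the t-forest is always contained in the t'-forest (up to connectivity), and
   active connection transfers. *)

Section SortedCount.
Context {disp : Order.disp_t} {T : porderType disp}.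

Lemma take_count_sorted_le (A : Type) (f : A -> T) (s : seq A) y :
  sorted <=%O (map f s) ->
  take (count (fun x => (f x <= y)%O) s) s = [seq x <- s | (f x <= y)%O].
Proof.
elim: s => [//|x s IHs] /= sorted_xs.
have {}IHs := IHs (path_sorted sorted_xs).
case: ifP => [_|fxNy]; first by rewrite add1n /= IHs.
have noP : count (fun z => (f z <= y)%O) s = 0%N.
  apply/eqP; rewrite -leqn0 leqNgt -has_count -all_predC.
  move: (order_path_min le_trans sorted_xs); rewrite all_map.
  by apply: sub_all => z /= le_fx_fz; apply: contraFN fxNy => /(le_trans le_fx_fz).
rewrite add0n noP take0.
by apply/esym/size0nil; rewrite size_filter noP.
Qed.

Lemma ltn_count_sorted_le (s : seq T) y x0 j : sorted <=%O s -> (j < size s)%N ->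
  (j < count (fun x => (x <= y)%O) s)%N = (nth x0 s j <= y)%O.
Proof.
move=> sorted_s lt_j_s; set n := count _ s.
have prefix : take n s = [seq x <- s | (x <= y)%O].
  by rewrite -[in RHS](map_id s) -take_count_sorted_le ?map_id // count_map.
case: (ltnP j n) => [lt_jn|le_nj].
  have : nth x0 s j \in take n s.
    by rewrite -(nth_take x0 lt_jn) mem_nth // size_takel ?count_size.
  by rewrite prefix mem_filter => /andP[->].
have : count (fun x => (x <= y)%O) (drop n s) = 0%N.
  have := count_cat (fun x => (x <= y)%O) (take n s) (drop n s).
  rewrite cat_take_drop prefix count_filter (eq_count (fun x => andbb _)).
  by move=> /eqP; rewrite -[X in X == _]addn0 eqn_add2l => /eqP <-.
move=> /eqP; rewrite -leqn0 leqNgt -has_count => /hasPn noP.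
apply/esym/negbTE/noP; rewrite -(subnKC le_nj) -nth_drop mem_nth // size_drop.
exact: ltn_sub2r (leq_ltn_trans le_nj lt_j_s) lt_j_s.
Qed.

End SortedCount.

Section Events.
Variables (R : realType) (V : finType).
Implicit Types (ev : seq (event R V)) (s : R).

Lemma take_n_at ev s : sorted <=%R (map fst ev) ->
  take (n_at ev s) ev = [seq p <- ev | p.1 <= s].
Proof. exact: take_count_sorted_le. Qed.

Lemma ltn_n_at ev s j : sorted <=%R (map fst ev) -> (j < size ev)%N ->
  (j < n_at ev s)%N = (nth 0 (map fst ev) j <= s).
Proof.
move=> sorted_ev lt_j_ev.
have -> : n_at ev s = count (fun x => x <= s) (map fst ev) by rewrite count_map.
by rewrite (ltn_count_sorted_le _ 0) ?size_map.
Qed.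

Lemma n_atE ev s i : sorted <=%R (map fst ev) -> (i <= size ev)%N ->
  start ev i <= s -> ((i < size ev)%N -> s < nth 0 (map fst ev) i) ->
  n_at ev s = i.
Proof.
move=> sorted_ev le_i_ev start_le lt_end; apply/eqP; rewrite eqn_leq.
apply/andP; split.
  case: (ltnP i (size ev)) => [lt_i_ev|]; last exact: leq_trans (count_size _ _).
  by rewrite leqNgt ltn_n_at // -ltNge lt_end.
by case: i le_i_ev start_le {lt_end} => [//|j] lt_j_ev; rewrite /= ltn_n_at.
Qed.

Lemma start_n_at_le ev s : sorted <=%R (map fst ev) -> 0 <= s ->
  start ev (n_at ev s) <= s.
Proof.
move=> sorted_ev s_ge0; case E: (n_at ev s) => [//|j] /=.
have lt_j_ev : (j < size ev)%N by rewrite -E; apply: count_size.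
by rewrite -ltn_n_at // E.
Qed.

Lemma lt_end_n_at ev s : sorted <=%R (map fst ev) -> (n_at ev s < size ev)%N ->
  s < nth 0 (map fst ev) (n_at ev s).
Proof. by move=> sorted_ev lt_n_ev; rewrite ltNge -ltn_n_at // ltnn. Qed.

Lemma filter_le_sub_take ev s i : sorted <=%R (map fst ev) -> (i < size ev)%N ->
  s < nth 0 (map fst ev) i -> {subset [seq p <- ev | p.1 <= s] <= take i ev}.
Proof.
move=> sorted_ev lt_i_ev lt_s_ti; rewrite -take_n_at //.
have le_n_i : (n_at ev s <= i)%N by rewrite leqNgt ltn_n_at // -ltNge.
by move=> p; rewrite -(take_takel _ le_n_i); apply: mem_take.
Qed.

Lemma start_ge0 ev i : (forall p, p \in ev -> 0 <= p.1) -> 0 <= start ev i.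
Proof.
case: i => [//|j] /= ev_ge0.
case: (ltnP j (size (map fst ev))) => [lt_j|le_j]; last by rewrite nth_default.
by have /mapP[p p_ev ->] := mem_nth 0 lt_j; apply: ev_ge0.
Qed.

Lemma connect_F_at_mono ev s1 s2 : s1 <= s2 ->
  subrel (connect (Defs.frel (F_at ev s1))) (connect (Defs.frel (F_at ev s2))).
Proof.
move=> le_s12; apply: connect_sub => x y F1xy; apply: connect1; move: F1xy.
have le_n : (n_at ev s1 <= n_at ev s2)%N.
  by apply: sub_count => p /= /le_trans; apply.
by rewrite /Defs.frel /F_at /forest_at -(take_takel _ le_n) !map_take => /orP[]
  /mem_take ->; rewrite ?orbT.
Qed.

End Events.

Section Components.
Variables (R : realType) (V : finType).
Implicit Types (F : seq (V * V)).

Lemma connect_frel_sym F : connect_sym (Defs.frel F).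
Proof. by apply: sym_connect_sym => x y; rewrite /Defs.frel orbC. Qed.

Lemma comp_eq F x y : connect (Defs.frel F) x y -> Defs.comp F x = Defs.comp F y.
Proof.
move=> Fxy; apply/setP => z; rewrite !inE; apply/idP/idP; last exact: connect_trans.
by apply: connect_trans; rewrite connect_frel_sym.
Qed.

Lemma is_compP F S : reflect (exists x, S = Defs.comp F x) (is_comp F S).
Proof. by apply: (iffP existsP) => -[x /eqP]; exists x. Qed.

Lemma comp_sep F a b x : (a \in Defs.comp F x) != (b \in Defs.comp F x) ->
  Defs.comp F x = Defs.comp F a \/ Defs.comp F x = Defs.comp F b.
Proof.
rewrite !inE; case Fxa: (connect _ x a) => /= sep_ab.
  by left; apply: comp_eq.
by right; apply: comp_eq; case: (connect _ x b) sep_ab.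
Qed.

Lemma sum_sep_comp F a b (g : {set V} -> R) :
  \sum_(S : {set V}) (if (a \in S) != (b \in S) then
     (if is_comp F S then g S else 0) else 0) =
  if connect (Defs.frel F) a b then 0
  else g (Defs.comp F a) + g (Defs.comp F b).
Proof.
case: ifP => Fab.
  have same_side x : (a \in Defs.comp F x) = (b \in Defs.comp F x).
    by rewrite !inE; apply/idP/idP => /connect_trans; apply;
      rewrite // connect_frel_sym.
  apply: big1 => S _; case: ifP => // sepS; case: is_compP => // -[x Sx].
  by rewrite Sx same_side eqxx in sepS.
have [ab_sepa ab_sepb] : (a \in Defs.comp F a) != (b \in Defs.comp F a) /\
    (a \in Defs.comp F b) != (b \in Defs.comp F b).
  by rewrite !inE !connect0 Fab connect_frel_sym Fab.
have neq_ab : Defs.comp F b != Defs.comp F a.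
  by apply/eqP => /setP/(_ b); rewrite !inE connect0 Fab.
have compa : is_comp F (Defs.comp F a) by apply/is_compP; exists a.
have compb : is_comp F (Defs.comp F b) by apply/is_compP; exists b.
rewrite (bigD1 (Defs.comp F a)) // (bigD1 (Defs.comp F b)) //= ab_sepa ab_sepb.
rewrite compa compb big1 ?addr0 // => S /andP[neq_Sa neq_Sb].
case: ifP => // sepS; case: is_compP => // -[x Sx].
by move: sepS neq_Sa neq_Sb; rewrite Sx; case/comp_sep => ->; rewrite eqxx.
Qed.

End Components.

Section LoadAsMeasure.
Local Open Scope classical_set_scope.
Variables (R : realType) (V : finType) (t : V -> R).
Implicit Types (ev : seq (event R V)) (tau s : R) (a b x : V).

Let phase_end ev tau i (S : {set V}) : R :=
  Num.min (Num.min (end_ ev i tau) tau) (Tmax t S).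

Lemma lt_Tmax (S : {set V}) s : 0 <= s -> (s < Tmax t S) = [exists w in S, s < t w].
Proof.
move=> s_ge0; apply/idP/idP; last first.
  case/existsP => w /andP[wS lt_s_tw].
  exact: lt_le_trans lt_s_tw (le_bigmax_cond _ _ wS).
apply: contraLR; rewrite negb_exists -leNgt => /forallP tS_le.
by apply: bigmax_le => // w wS; move: (tS_le w); rewrite wS -leNgt.
Qed.

Lemma loadE ev a b tau : load t ev a b tau =
  \sum_(i < (size ev).+1)
    (if connect (Defs.frel (forest_at ev i)) a b then 0
     else Num.max 0 (phase_end ev tau i (Defs.comp (forest_at ev i) a) - start ev i)
        + Num.max 0 (phase_end ev tau i (Defs.comp (forest_at ev i) b) - start ev i)).
Proof.
rewrite /load /yval (eq_bigr (fun S : {set V} => \sum_(i < (size ev).+1)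
  (if (a \in S) != (b \in S) then (if is_comp (forest_at ev i) S then
     Num.max 0 (phase_end ev tau i S - start ev i) else 0) else 0))); last first.
  by move=> S _; case: ifP => _; [apply: eq_bigr|rewrite big1].
by rewrite exchange_big; apply: eq_bigr => i _; rewrite sum_sep_comp.
Qed.

Definition phase_growth_times ev a b tau x (i : nat) : set R :=
  if connect (Defs.frel (forest_at ev i)) a b then set0
  else [set` Interval (BLeft (start ev i))
              (BLeft (phase_end ev tau i (Defs.comp (forest_at ev i) x)))].

Definition growth_times ev a b tau x : set R :=
  [set s | [/\ 0 <= s, s < tau, ~~ connect (Defs.frel (F_at ev s)) a b
     & active t (F_at ev s) s x]].

Lemma phase_growth_times_measurable ev a b tau x i :
  measurable (phase_growth_times ev a b tau x i).
Proof.
rewrite /phase_growth_times; case: ifP => _; first exact: measurable0.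
exact: measurable_itv.
Qed.

Lemma measure_phase_growth_times ev a b tau x i :
  lebesgue_measure (phase_growth_times ev a b tau x i) =
  (if connect (Defs.frel (forest_at ev i)) a b then 0
   else Num.max 0 (phase_end ev tau i (Defs.comp (forest_at ev i) x) - start ev i))%:E.
Proof.
rewrite /phase_growth_times; case: ifP => _; first by rewrite measure0.
rewrite lebesgue_measure_itv /= lte_fin; case: ltP => [lt_se|le_es].
  by rewrite -EFinD; congr EFin; apply/esym/max_idPr; rewrite subr_ge0 ltW.
by congr EFin; apply/esym/max_idPl; rewrite subr_le0.
Qed.

Variable ev : seq (event R V).
Hypothesis ev_sorted : sorted <=%R (map fst ev).
Hypothesis ev_ge0 : forall p, p \in ev -> 0 <= p.1.

Lemma phase_growth_timesP a b tau x i s : (i <= size ev)%N ->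
  phase_growth_times ev a b tau x i s ->
  [/\ n_at ev s = i, 0 <= s, s < tau, ~~ connect (Defs.frel (forest_at ev i)) a b
    & s < Tmax t (Defs.comp (forest_at ev i) x)].
Proof.
rewrite /phase_growth_times => le_i_ev; case: ifP => // Nab.
rewrite /= in_itv /= !lt_min => /and3P[start_le /andP[lt_end lt_tau] lt_Tmax_x].
split => //; last exact: le_trans (start_ge0 i ev_ge0) start_le.
by apply: n_atE => // lt_i_ev; move: lt_end; rewrite /end_ lt_i_ev.
Qed.

Lemma growth_timesE a b tau x : growth_times ev a b tau x =
  \big[setU/set0]_(i < (size ev).+1) phase_growth_times ev a b tau x i.
Proof.
apply/seteqP; split => s.
  case=> s_ge0 lt_s_tau Nab act_x.
  apply: (@bigsetU_sup _ (n_at ev s)); first by rewrite ltnS count_size.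
  rewrite /phase_growth_times -/(F_at ev s) (negbTE Nab) /= in_itv /=.
  rewrite start_n_at_le // !lt_min lt_s_tau lt_Tmax //.
  rewrite -/(active t (F_at ev s) s x) act_x !andbT /end_.
  by case: ifP => // lt_n_ev; rewrite lt_end_n_at.
rewrite -bigcup_mkord => -[i /= lt_i].
have le_i : (i <= size ev)%N by rewrite -ltnS.
case/(phase_growth_timesP le_i) => n_at_s s_ge0 lt_s_tau Nab.
by rewrite (lt_Tmax _ s_ge0) => act_x; split; rewrite // /F_at n_at_s.
Qed.

Lemma growth_times_measurable a b tau x : measurable (growth_times ev a b tau x).
Proof.
rewrite growth_timesE; apply: bigsetU_measurable => i _.
exact: phase_growth_times_measurable.
Qed.

Lemma load_growth_times a b tau : (load t ev a b tau)%:E =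
  (lebesgue_measure (growth_times ev a b tau a) +
   lebesgue_measure (growth_times ev a b tau b))%E.
Proof.
have disj x : trivIset [set: 'I_(size ev).+1]
    (fun i => phase_growth_times ev a b tau x i).
  move=> i j _ _ [s [Di Dj]]; apply: val_inj.
  have [le_i le_j] : (i <= size ev)%N /\ (j <= size ev)%N by split; rewrite -ltnS.
  case: (phase_growth_timesP le_i Di) (phase_growth_timesP le_j Dj).
  by move=> ni _ _ _ _ [nj _ _ _ _]; exact: etrans (esym ni) nj.
rewrite !growth_timesE !measure_bigsetU_ord //;
  try exact: phase_growth_times_measurable.
rewrite loadE -big_split /= -sumEFin; apply: eq_bigr => i _.
by rewrite !measure_phase_growth_times; case: ifP => _; rewrite ?adde0 // EFinD.
Qed.

End LoadAsMeasure.

Section Monotonicity.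
Variables (R : realType) (V : finType) (adj : rel V) (c : V -> V -> R).
Variables (t t' : V -> R).
Hypothesis t_le : forall w, t w <= t' w.
Implicit Types (ev : seq (event R V)) (tau s : R) (a b x : V).

Definition merged_in ev' (p : event R V) : bool :=
  connect (Defs.frel (F_at ev' p.1)) p.2.1 p.2.2.

Lemma connect_F_at_sub ev ev' s : sorted <=%R (map fst ev) ->
  {in [seq p <- ev | p.1 <= s], forall p, merged_in ev' p} ->
  subrel (connect (Defs.frel (F_at ev s))) (connect (Defs.frel (F_at ev' s))).
Proof.
move=> sorted_ev merged; apply: connect_sub.
have edge_merged x y : (x, y) \in F_at ev s -> connect (Defs.frel (F_at ev' s)) x y.
  rewrite [F_at ev s]/F_at /forest_at take_n_at // => /mapP[p p_le_s pxy].
  move: p_le_s (merged p p_le_s); rewrite /merged_in -pxy mem_filter /=.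
  by move=> /andP[le_ps _]; apply: connect_F_at_mono.
by move=> x y /orP[/edge_merged //|/edge_merged]; rewrite connect_frel_sym.
Qed.

Lemma active_sub F F' s x :
  subrel (connect (Defs.frel F)) (connect (Defs.frel F')) ->
  active t F s x -> active t' F' s x.
Proof.
move=> FF' /existsP[w /andP[wFx lt_s_tw]]; apply/existsP; exists w.
by rewrite inE in wFx; rewrite inE FF' //= (lt_le_trans lt_s_tw).
Qed.

Lemma load_le ev ev' a b tau :
  sorted <=%R (map fst ev) -> (forall p, p \in ev -> 0 <= p.1) ->
  sorted <=%R (map fst ev') -> (forall p, p \in ev' -> 0 <= p.1) ->
  (forall s, 0 <= s -> s < tau ->
     subrel (connect (Defs.frel (F_at ev s))) (connect (Defs.frel (F_at ev' s)))) ->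
  ~~ connect (Defs.frel (F_at ev' tau)) a b ->
  load t ev a b tau <= load t' ev' a b tau.
Proof.
move=> ev_sorted ev_ge0 ev'_sorted ev'_ge0 FF' Nab'.
rewrite -lee_fin !load_growth_times //.
have sub x : (growth_times t ev a b tau x `<=` growth_times t' ev' a b tau x)%classic.
  move=> s [s_ge0 lt_s_tau Nab act_x]; split => //.
    by apply: contra Nab' => /connect_F_at_mono; apply; apply: ltW.
  exact: active_sub (FF' s s_ge0 lt_s_tau) act_x.
by apply: leeD; apply: le_measure; try exact: sub;
  apply/mem_set; exact: growth_times_measurable.
Qed.

Lemma run_merged_step ev ev' (i : 'I_(size ev)) :
  is_run t adj c ev -> is_run t' adj c ev' ->
  {in take i ev, forall p, merged_in ev' p} -> merged_in ev' (tnth (in_tuple ev) i).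
Proof.
move=> [ev_ge0 ev_sorted ev_tight _] [ev'_ge0 ev'_sorted _ ev'_complete] merged.
have p_ev := mem_tnth i (in_tuple ev).
have tiE : nth 0 (map fst ev) i = (tnth (in_tuple ev) i).1.
  by rewrite (nth_map (tnth (in_tuple ev) i)) // -(tnth_nth _ (in_tuple ev) i).
move: (ev_tight i) p_ev tiE; rewrite /merged_in.
case: (tnth _ i) => ti [a b] [adj_ab _ tight] /ev_ge0 /= ti_ge0 tiE.
apply/contraT => Nab'; move: (ev'_complete ti ti_ge0 a b adj_ab Nab').
suff le_load : load t ev a b ti <= load t' ev' a b ti by rewrite -tight ltNge le_load.
apply: load_le => // s s_ge0 lt_s_ti; apply: connect_F_at_sub => // p.
have lt_s_nth : s < nth 0 (map fst ev) i by rewrite tiE.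
by move/(filter_le_sub_take ev_sorted (ltn_ord i) lt_s_nth); apply: merged.
Qed.

Lemma run_merged ev ev' : is_run t adj c ev -> is_run t' adj c ev' ->
  {in ev, forall p, merged_in ev' p}.
Proof.
move=> run run'.
suff merged_prefix n : {in take n ev, forall p, merged_in ev' p}.
  by move=> p; rewrite -(take_size ev); apply: merged_prefix.
elim: n => [|n IHn]; first by move=> p; rewrite take0.
case: (ltnP n (size ev)) => [lt_n_ev|le_ev_n]; last first.
  move=> p; rewrite take_oversize ?(leqW le_ev_n) // -(take_oversize le_ev_n).
  exact: IHn.
pose x0 := tnth (in_tuple ev) (Ordinal lt_n_ev).
have nthE : nth x0 ev n = x0 := esym (tnth_nth x0 (in_tuple ev) (Ordinal lt_n_ev)).
rewrite (take_nth x0) // nthE => p.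
by rewrite mem_rcons inE => /predU1P[->|/IHn //]; apply: run_merged_step.
Qed.

Lemma connect_F_at_run_sub ev ev' s :
  is_run t adj c ev -> is_run t' adj c ev' ->
  subrel (connect (Defs.frel (F_at ev s))) (connect (Defs.frel (F_at ev' s))).
Proof.
move=> run run'; apply: connect_F_at_sub; first by case: run.
by move=> p; rewrite mem_filter => /andP[_]; apply: run_merged.
Qed.

End Monotonicity.

Unset Implicit Arguments.

Theorem mainTheorem5 (R : realType) (V : finType) (adj : rel V)
    (c : V -> V -> R) (t t' : V -> R)
    (adj_sym : symmetric adj) (adj_irr : irreflexive adj)
    (c_sym : forall u v, adj u v -> c u v = c v u)
    (c_ge0 : forall u v, adj u v -> 0 <= c u v)
    (t_ge0 : forall w, 0 <= t w) (t'_ge0 : forall w, 0 <= t' w)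
    (t_le : forall w, t w <= t' w)
    (ev ev' : seq (event R V)) (u v : V) :
  is_run t adj c ev -> is_run t' adj c ev' ->
  actively_connected t ev u v -> actively_connected t' ev' u v.
Proof.
move=> run run' [tau [tau_ge0 conn_uv act_uv]].
have FF' s := connect_F_at_run_sub t_le (s := s) run run'.
exists tau; split => [//||s s_ge0 lt_s_tau]; first exact: FF'.
by case/andP: (act_uv s s_ge0 lt_s_tau) => act_u act_v;
  rewrite !(active_sub t_le (FF' s)).
Qed.
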